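(* Consider the symmetric robot rendezvous system $$\dot{x}_k(t)=\tfrac{1}{2}\big(x_{k-1}(t)+x_{k+1}(t)\big)-x_k(t),\quad k\in\mathbb{Z},\ t\ge0,$$ with initial constellation $x_0=(x_k(0))_{k\in\mathbb{Z}}\in\ell^\infty(\mathbb{Z})$. Then $x_0$ is good if and only if there exists $c\in\mathbb{C}$ such that $$\sup_{k\in\mathbb{Z}}\bigg|\frac{1}{n}\sum_{j=1}^n\frac{1}{2^j}\sum_{\ell=0}^j\binom{j}{\ell}x_{k-j+2\ell}(0)-c\bigg|\to0\quad\text{as } n\to\infty, \tag{$*$}$$ and in this case $\sup_{k\in\mathbb{Z}}|x_k(t)-c|\to0$ as $t\to\infty$. Furthermore, if the quantity on the left of $( * )$ is $O(n^{-1})$ as $n\to\infty$, then $\sup_{k\in\mathbb{Z}}|x_k(t)-c|=O(t^{-1})$ as $t\to\infty$.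
   Context: $\ell^\infty(\mathbb{Z})$ is the Banach space of bounded doubly infinite complex sequences with the supremum norm. $S$ denotes the right-shift $S(x_k)=(x_{k-1})$ and $S^{-1}$ the left-shift $S^{-1}(x_k)=(x_{k+1})$ on $\ell^\infty(\mathbb{Z})$. For $x_0\in\ell^\infty(\mathbb{Z})$, the solution of the system is $x(t)=(x_k(t))_{k\in\mathbb{Z}}=\exp\big(t(\tfrac12(S+S^{-1})-I)\big)x_0$, $t\ge0$. An initial constellation $x_0$ is called good if there exist constants $c_k\in\mathbb{C}$, $k\in\mathbb{Z}$, such that the corresponding solution satisfies $\sup_{k\in\mathbb{Z}}|x_k(t)-c_k|\to0$ as $t\to\infty$. $a(t)=O(b(t))$ means there is $C>0$ with $a(t)\le Cb(t)$ for all sufficiently large arguments. *)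

From Stdlib Require Import Reals ZArith List ClassicalEpsilon.
Open Scope R_scope.

(* Complex numbers as pairs (re, im). *)
Definition Cx : Type := (R * R)%type.
Definition C0 : Cx := (0, 0).
Definition Cadd (z w : Cx) : Cx := (fst z + fst w, snd z + snd w).
Definition Csub (z w : Cx) : Cx := (fst z - fst w, snd z - snd w).
Definition Cscal (r : R) (z : Cx) : Cx := (r * fst z, r * snd z).
Definition Cnorm (z : Cx) : R := sqrt (fst z ^ 2 + snd z ^ 2).

(* Csum f m n = f m + f (m+1) + ... + f n  (empty if n < m). *)
Definition Csum (f : nat -> Cx) (m n : nat) : Cx :=
  fold_right Cadd C0 (map f (seq m (S n - m))).

Definition linf_bounded (x : Z -> Cx) : Prop :=
  exists M : R, forall k : Z, Cnorm (x k) <= M.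

Definition Sshift (x : Z -> Cx) : Z -> Cx := fun k => x (k - 1)%Z.
Definition Sinv (x : Z -> Cx) : Z -> Cx := fun k => x (k + 1)%Z.

Definition Aop (x : Z -> Cx) : Z -> Cx :=
  fun k => Csub (Cscal (/ 2) (Cadd (Sshift x k) (Sinv x k))) (x k).

Definition Apow (n : nat) (x : Z -> Cx) : Z -> Cx := Nat.iter n Aop x.

Definition exp_partial (t : R) (x0 : Z -> Cx) (N : nat) : Z -> Cx :=
  fun k => Csum (fun n => Cscal (t ^ n / INR (fact n)) (Apow n x0 k)) 0 N.

(* x(t) = exp(tA) x0 for all t >= 0: the exponential series converges to x(t)
   in the sup norm of l^infty(Z). *)
Definition is_exp_sol (x0 : Z -> Cx) (x : R -> Z -> Cx) : Prop :=
  forall t : R, 0 <= t ->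
  forall eps : R, 0 < eps ->
  exists N0 : nat, forall N : nat, (N0 <= N)%nat ->
  forall k : Z, Cnorm (Csub (exp_partial t x0 N k) (x t k)) <= eps.

Definition expsol (x0 : Z -> Cx) : R -> Z -> Cx :=
  epsilon (inhabits (fun (_ : R) (_ : Z) => C0)) (is_exp_sol x0).

Definition good_constellation (x0 : Z -> Cx) : Prop :=
  exists c : Z -> Cx,
  forall eps : R, 0 < eps ->
  exists T : R, forall t : R, T <= t -> 0 <= t ->
  forall k : Z, Cnorm (Csub (expsol x0 t k) (c k)) <= eps.

Definition cesaro (x0 : Z -> Cx) (n : nat) (k : Z) : Cx :=
  Cscal (/ INR n)
    (Csum (fun j => Cscal (/ 2 ^ j)
       (Csum (fun l => Cscal (Binomial.C j l)
                 (x0 (k - Z.of_nat j + 2 * Z.of_nat l)%Z)) 0 j)) 1 n).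

Definition cesaro_conv (x0 : Z -> Cx) (c : Cx) : Prop :=
  forall eps : R, 0 < eps ->
  exists N0 : nat, forall n : nat, (N0 <= n)%nat -> (1 <= n)%nat ->
  forall k : Z, Cnorm (Csub (cesaro x0 n k) c) <= eps.

Definition cesaro_O (x0 : Z -> Cx) (c : Cx) : Prop :=
  exists M : R, exists N0 : nat, forall n : nat, (N0 <= n)%nat -> (1 <= n)%nat ->
  forall k : Z, Cnorm (Csub (cesaro x0 n k) c) <= M / INR n.

Definition sol_conv (x0 : Z -> Cx) (c : Cx) : Prop :=
  forall eps : R, 0 < eps ->
  exists T : R, forall t : R, T <= t -> 0 <= t ->
  forall k : Z, Cnorm (Csub (expsol x0 t k) c) <= eps.

Definition sol_O (x0 : Z -> Cx) (c : Cx) : Prop :=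
  exists M : R, exists T : R, forall t : R, T <= t -> 0 < t ->
  forall k : Z, Cnorm (Csub (expsol x0 t k) c) <= M / t.

From Coquelicot Require Import Coquelicot.
From Stdlib Require Import Reals ZArith Lra Lia FunctionalExtensionality ClassicalEpsilon List.
Open Scope R_scope.

(* With T = (S + S^-1)/2 the solution is x(t) = exp(tA) x0 for A = T - I = 2(W - I), where
   W = (I + T)/2 is the lazy walk; hence exp(tA) = sum_j e^(-2t) (2t)^j/j! W^j is a Poisson
   average of the powers of W.  Writing W^j as a binomial average gives the Ritt estimate
   |W^(j+1) - W^j| <= 1/(j+1), so that exp(tA) A and A exp(tA) are O(1/t).

   The Cesaro mean M_N = (1/N) sum_(j=1..N) T^j, whose value at x0 is the expression in ( * ),
   satisfies M_N - I = A Y_N with Y_N = (1/N) sum_(j<N) sum_(i<=j) T^i.  Hence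
   |exp(tA) x0 - c| <= |M_N x0 - c| + |Y_N (x0 - c)|/t: Cesaro convergence gives convergence of
   the solution, and an O(1/N) rate keeps Y_N (x0 - c) bounded uniformly in N, giving O(1/t).
   Conversely, if x(t) tends to a profile (c_k), then A c = 0 with c bounded, so c is affine on Z
   and thus constant; and x0 - c = (exp(tA) x0 - c) - A w with w = int_0^t exp(sA) x0 ds of size
   at most t |x0|, so M_n (x0 - c) is bounded by |exp(tA) x0 - c| + O(t/n).
   Complex sequences are handled through their real and imaginary parts. *)

Lemma Rabs_minus_le a b : Rabs (a - b) <= Rabs a + Rabs b.
Proof. unfold Rminus. eapply Rle_trans; [apply Rabs_triang|]. rewrite Rabs_Ropp. lra. Qed.

Lemma Rabs_le_eps_eq0 x : (forall eps, 0 < eps -> Rabs x <= eps) -> x = 0.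
Proof.
  intros H. apply Rabs_eq_0, Rle_antisym; [|apply Rabs_pos].
  apply Rle_plus_epsilon. intros. rewrite Rplus_0_l. auto.
Qed.

Lemma eventually_div_le A eps : 0 < eps ->
  exists N0, (1 <= N0)%nat /\ forall n, (N0 <= n)%nat -> A / INR n <= eps.
Proof.
  intros He. assert (HA := Rabs_pos A).
  destruct (archimed_cor1 (eps / (Rabs A + 1))) as [N0 [Hsmall Hpos]];
    [apply Rdiv_lt_0_compat; lra|].
  exists N0. split; [lia|]. intros n Hn.
  assert (HN : 0 < INR N0) by (apply lt_0_INR; lia).
  assert (Hinv : / INR n <= / INR N0) by (apply Rinv_le_contravar, le_INR; auto).
  assert (Hn0 : 0 < / INR n) by (apply Rinv_0_lt_compat, lt_0_INR; lia).
  assert (/ INR N0 * (Rabs A + 1) < eps)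
    by (apply (Rmult_lt_compat_r (Rabs A + 1)) in Hsmall; [|lra];
        unfold Rdiv in Hsmall; rewrite Rmult_assoc, Rinv_l, Rmult_1_r in Hsmall; lra).
  unfold Rdiv. pose proof (Rle_abs A). nra.
Qed.

Fixpoint psum (g : nat -> R) (n : nat) : R :=
  match n with O => 0 | S n => psum g n + g n end.

Lemma psum_ext g h n : (forall i, (i < n)%nat -> g i = h i) -> psum g n = psum h n.
Proof. induction n; simpl; intros H; auto. rewrite IHn, H; auto; intros; apply H; lia. Qed.

Lemma psum_plus g h n : psum (fun i => g i + h i) n = psum g n + psum h n.
Proof. induction n; simpl; [ring | rewrite IHn; ring]. Qed.

Lemma psum_minus g h n : psum (fun i => g i - h i) n = psum g n - psum h n.
Proof. induction n; simpl; [ring | rewrite IHn; ring]. Qed.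

Lemma psum_scal a g n : psum (fun i => a * g i) n = a * psum g n.
Proof. induction n; simpl; [ring | rewrite IHn; ring]. Qed.

Lemma psum_const a n : psum (fun _ => a) n = INR n * a.
Proof. induction n; simpl psum; [simpl; ring | rewrite IHn, S_INR; ring]. Qed.

Lemma psum_first g n : psum g (S n) = g O + psum (fun i => g (S i)) n.
Proof. induction n; simpl in *; [ring | rewrite IHn; ring]. Qed.

Lemma psum_telescope g n : psum (fun i => g (S i) - g i) n = g n - g O.
Proof. induction n; simpl; [ring | rewrite IHn; ring]. Qed.

Lemma psum_sum_f_R0 g n : psum g (S n) = sum_f_R0 g n.
Proof. induction n; simpl in *; [ring | rewrite <- IHn; simpl; ring]. Qed.

Lemma psum_le g h n : (forall i, (i < n)%nat -> g i <= h i) -> psum g n <= psum h n.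
Proof.
  induction n; simpl; intros H; [lra|].
  assert (g n <= h n) by (apply H; lia).
  assert (psum g n <= psum h n) by (apply IHn; intros; apply H; lia). lra.
Qed.

Lemma psum_abs g n : Rabs (psum g n) <= psum (fun i => Rabs (g i)) n.
Proof.
  induction n; simpl; [rewrite Rabs_R0; lra|].
  eapply Rle_trans; [apply Rabs_triang | lra].
Qed.

Lemma psum_abs_bound g n B :
  (forall i, (i < n)%nat -> Rabs (g i) <= B) -> Rabs (psum g n) <= INR n * B.
Proof.
  intros H. eapply Rle_trans; [apply psum_abs|].
  rewrite <- psum_const. apply psum_le; auto.
Qed.

Lemma C_nonneg n k : 0 <= C n k.
Proof.
  unfold C. apply Rle_mult_inv_pos; [apply pos_INR|].
  apply Rmult_lt_0_compat; apply INR_fact_lt_0.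
Qed.

Lemma C_n_n n : C n n = 1.
Proof. unfold C. rewrite Nat.sub_diag. simpl. field. apply INR_fact_neq_0. Qed.

Lemma C_n_0 n : C n 0 = 1.
Proof. unfold C. rewrite Nat.sub_0_r. simpl. field. apply INR_fact_neq_0. Qed.

Lemma psum_pascal (f : nat -> R) n :
  psum (fun l => C (S n) l * f l) (S (S n)) =
  psum (fun l => C n l * f l) (S n) + psum (fun l => C n l * f (S l)) (S n).
Proof.
  rewrite (psum_first _ (S n)), (psum_first (fun l => C n l * f l)).
  change (psum (fun i => C (S n) (S i) * f (S i)) (S n)) with
    (psum (fun i => C (S n) (S i) * f (S i)) n + C (S n) (S n) * f (S n)).
  change (psum (fun l => C n l * f (S l)) (S n)) with
    (psum (fun l => C n l * f (S l)) n + C n n * f (S n)).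
  rewrite (psum_ext (fun i => C (S n) (S i) * f (S i))
             (fun i => C n i * f (S i) + C n (S i) * f (S i))).
  2:{ intros i Hi. rewrite <- pascal by auto. ring. }
  rewrite psum_plus, !C_n_n, !C_n_0. ring.
Qed.

Lemma psum_C n : psum (fun l => C n l) (S n) = 2 ^ n.
Proof.
  rewrite psum_sum_f_R0. replace 2 with (1 + 1) by ring. rewrite binomial.
  apply sum_eq; intros; rewrite !pow1; ring.
Qed.

Definition bw (n l : nat) : R := C n l / 2 ^ n.

Lemma bw_nonneg n l : 0 <= bw n l.
Proof. apply Rle_mult_inv_pos; [apply C_nonneg | apply pow_lt; lra]. Qed.

Lemma bw_mass n : psum (bw n) (S n) = 1.
Proof.
  unfold bw. rewrite (psum_ext _ (fun l => / 2 ^ n * C n l)) by (intros; unfold Rdiv; ring).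
  rewrite psum_scal, psum_C. field. apply pow_nonzero; lra.
Qed.

Lemma C_SS_S n m : (m <= n)%nat ->
  C (S (S n)) (S m) * INR (S m) * INR (S (n - m)) = INR (S (S n)) * INR (S n) * C n m.
Proof.
  intros Hm. unfold C. replace (S (S n) - S m)%nat with (S (n - m)) by lia.
  change (fact (S (S n))) with (S (S n) * (S n * fact n))%nat.
  change (fact (S m)) with (S m * fact m)%nat.
  change (fact (S (n - m))) with (S (n - m) * fact (n - m))%nat.
  rewrite !mult_INR. field.
  repeat split; try apply INR_fact_neq_0; apply not_0_INR; lia.
Qed.

Definition seqZ := Z -> R.

Definition linear_op (F : seqZ -> seqZ) := forall a b f g,
  F (fun k => a * f k + b * g k) = fun k => a * F f k + b * F g k.

Definition bounded_by (y : seqZ) (B : R) := forall k, Rabs (y k) <= B.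

Definition nonexpansive (F : seqZ -> seqZ) := forall y B, bounded_by y B -> bounded_by (F y) B.

Lemma bounded_by_nonneg y B : bounded_by y B -> 0 <= B.
Proof. intros H. specialize (H 0%Z). pose proof (Rabs_pos (y 0%Z)). lra. Qed.

Lemma bounded_by_sub_const y B c : bounded_by y B -> bounded_by (fun k => y k - c) (B + Rabs c).
Proof. intros H k. eapply Rle_trans; [apply Rabs_minus_le|]. specialize (H k). lra. Qed.

Lemma linear_op_iter F n : linear_op F -> linear_op (Nat.iter n F).
Proof. intros HF. induction n; intros a b f g; simpl; auto. rewrite IHn. apply HF. Qed.

Lemma nonexpansive_iter F n : nonexpansive F -> nonexpansive (Nat.iter n F).
Proof. intros HF; induction n; intros y B H; simpl; auto. Qed.

Section LinearOp.
Variable F : seqZ -> seqZ.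
Hypothesis HF : linear_op F.

Lemma linear_op_scal a f : F (fun k => a * f k) = fun k => a * F f k.
Proof.
  replace (fun k => a * f k) with (fun k => a * f k + 0 * f k)
    by (apply functional_extensionality; intros; ring).
  rewrite HF. apply functional_extensionality; intros; ring.
Qed.

Lemma linear_op_psum (g : nat -> seqZ) n :
  F (fun k => psum (fun i => g i k) n) = fun k => psum (fun i => F (g i) k) n.
Proof.
  induction n; simpl.
  - replace (fun _ : Z => 0) with (fun k : Z => 0 * (fun _ => 0) k + 0 * (fun _ => 0) k)
      by (apply functional_extensionality; intros; ring).
    rewrite HF. apply functional_extensionality; intros; ring.
  - replace (fun k => psum (fun i => g i k) n + g n k) with
      (fun k => 1 * (fun k => psum (fun i => g i k) n) k + 1 * g n k)
      by (apply functional_extensionality; intros; ring).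
    rewrite HF, IHn. apply functional_extensionality; intros; ring.
Qed.

End LinearOp.

Definition avg2 (a b : Z) (y : seqZ) : seqZ := fun k => / 2 * (y (k + a)%Z + y (k + b)%Z).

Lemma avg2_iter a b n y k : Nat.iter n (avg2 a b) y k =
  / 2 ^ n * psum (fun l => C n l * y (k + Z.of_nat n * a + Z.of_nat l * (b - a))%Z) (S n).
Proof.
  revert k; induction n; intros k.
  - simpl. rewrite C_n_0, !Z.add_0_r. field.
  - change (Nat.iter (S n) (avg2 a b) y k) with (avg2 a b (Nat.iter n (avg2 a b) y) k).
    unfold avg2 at 1. rewrite !IHn.
    rewrite (psum_pascal (fun l => y (k + Z.of_nat (S n) * a + Z.of_nat l * (b - a))%Z)).
    rewrite (psum_ext (fun l => C n l * y (k + a + Z.of_nat n * a + Z.of_nat l * (b - a))%Z)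
       (fun l => C n l * y (k + Z.of_nat (S n) * a + Z.of_nat l * (b - a))%Z)).
    2:{ intros; rewrite Nat2Z.inj_succ; do 2 f_equal; ring. }
    rewrite (psum_ext (fun l => C n l * y (k + b + Z.of_nat n * a + Z.of_nat l * (b - a))%Z)
       (fun l => C n l * y (k + Z.of_nat (S n) * a + Z.of_nat (S l) * (b - a))%Z)).
    2:{ intros; rewrite !Nat2Z.inj_succ; do 2 f_equal; ring. }
    simpl pow. field. apply pow_nonzero; lra.
Qed.

Lemma avg2_linear a b : linear_op (avg2 a b).
Proof. intros c d f g. apply functional_extensionality; intros k; unfold avg2; ring. Qed.

Lemma avg2_nonexpansive a b : nonexpansive (avg2 a b).
Proof.
  intros y B H k. unfold avg2.
  pose proof (H (k + a)%Z). pose proof (H (k + b)%Z).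
  assert (Rabs (y (k + a)%Z + y (k + b)%Z) <= 2 * B)
    by (eapply Rle_trans; [apply Rabs_triang | lra]).
  rewrite Rabs_mult, Rabs_inv, Rabs_right by lra. lra.
Qed.

(* Real-sequence versions of T = (S + S^-1)/2, the lazy walk W = (I + T)/2 and
   the generator A = T - I; [Lr] is an auxiliary one-sided average with W y k = Lr (Lr y) (k+1). *)
Definition Tr := avg2 (-1) 1.
Definition Lr := avg2 0 (-1).
Definition Wr (y : seqZ) : seqZ := fun k => / 4 * (y (k + -1)%Z + 2 * y k + y (k + 1)%Z).
Definition Ar (y : seqZ) : seqZ := fun k => Tr y k - y k.

Definition Tpow n := Nat.iter n Tr.
Definition Wpow n := Nat.iter n Wr.
Definition Arpow n := Nat.iter n Ar.

Lemma Tpow_linear n : linear_op (Tpow n).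
Proof. apply linear_op_iter, avg2_linear. Qed.

Lemma Tpow_nonexpansive n : nonexpansive (Tpow n).
Proof. apply nonexpansive_iter, avg2_nonexpansive. Qed.

Lemma Tpow_const n c : Tpow n (fun _ => c) = fun _ => c.
Proof.
  induction n; auto. change (Tr (Tpow n (fun _ => c)) = fun _ => c). rewrite IHn.
  apply functional_extensionality; intros; unfold Tr, avg2; field.
Qed.

Lemma Wr_linear : linear_op Wr.
Proof. intros c d f g. apply functional_extensionality; intros k; unfold Wr; ring. Qed.

Lemma Wpow_linear n : linear_op (Wpow n).
Proof. apply linear_op_iter, Wr_linear. Qed.

Lemma Wpow_nonexpansive n : nonexpansive (Wpow n).
Proof.
  apply nonexpansive_iter. intros y B H k. unfold Wr.
  pose proof (H (k + -1)%Z). pose proof (H k). pose proof (H (k + 1)%Z).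
  assert (Rabs (y (k + -1)%Z + 2 * y k + y (k + 1)%Z) <= 4 * B).
  { eapply Rle_trans; [apply Rabs_triang|]. eapply Rle_trans.
    { apply Rplus_le_compat_r, Rabs_triang. }
    rewrite Rabs_mult, (Rabs_right 2) by lra. lra. }
  rewrite Rabs_mult, Rabs_right by lra. lra.
Qed.

Lemma Wpow_const n c : Wpow n (fun _ => c) = fun _ => c.
Proof.
  induction n; auto. change (Wr (Wpow n (fun _ => c)) = fun _ => c). rewrite IHn.
  apply functional_extensionality; intros; unfold Wr; field.
Qed.

Lemma Ar_linear : linear_op Ar.
Proof. intros c d f g. apply functional_extensionality; intros k; unfold Ar, Tr, avg2; ring. Qed.

Lemma Ar_as_Wr y : Ar y = fun k => 2 * Wr y k + (-2) * y k.
Proof. apply functional_extensionality; intros k; unfold Ar, Tr, avg2, Wr. field. Qed.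

Lemma Wpow_Ar j y : Wpow j (Ar y) = fun k => 2 * Wpow (S j) y k + (-2) * Wpow j y k.
Proof.
  rewrite Ar_as_Wr, (Wpow_linear j 2 (-2) (Wr y) y). unfold Wpow.
  rewrite <- Nat.iter_succ_r. reflexivity.
Qed.

Lemma Ar_bounded y B : bounded_by y B -> bounded_by (Ar y) (2 * B).
Proof.
  intros H k. unfold Ar. eapply Rle_trans; [apply Rabs_minus_le|].
  pose proof (avg2_nonexpansive (-1) 1 y B H k). specialize (H k). unfold Tr. lra.
Qed.

Lemma Wpow_binomial j y k : Wpow j y k =
  psum (fun l => bw (2 * j) l * y (k + Z.of_nat j - Z.of_nat l)%Z) (S (2 * j)).
Proof.
  assert (Hshift : forall n d (y : seqZ),
            Nat.iter n Lr (fun k => y (k + d)%Z) = fun k => Nat.iter n Lr y (k + d)%Z).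
  { intros n d y'. apply functional_extensionality; intros k'. unfold Lr. rewrite !avg2_iter.
    f_equal. apply psum_ext; intros; do 2 f_equal; lia. }
  assert (HL : Wpow j y = fun k => Nat.iter (2 * j) Lr y (k + Z.of_nat j)%Z).
  { induction j; apply functional_extensionality; intros k'; [simpl; f_equal; lia|].
    change (Wr (Wpow j y) k' = Nat.iter (2 * S j) Lr y (k' + Z.of_nat (S j))%Z).
    rewrite IHj.
    transitivity (Nat.iter 2 Lr (fun k0 => Nat.iter (2 * j) Lr y (k0 + Z.of_nat j)%Z) (k' + 1)%Z).
    { unfold Wr. simpl. unfold Lr, avg2. rewrite !Z.add_0_r.
      replace (k' + 1 + -1)%Z with k' by lia. replace (k' + 1 + -1 + -1)%Z with (k' + -1)%Z by lia.
      field. }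
    rewrite Hshift, <- Nat.iter_add. replace (2 + 2 * j)%nat with (2 * S j)%nat by lia.
    f_equal; lia. }
  rewrite HL. unfold Lr. rewrite avg2_iter, <- psum_scal.
  apply psum_ext; intros i Hi.
  replace (k + Z.of_nat j + Z.of_nat (2 * j) * 0 + Z.of_nat i * (-1 - 0))%Z
    with (k + Z.of_nat j - Z.of_nat i)%Z by lia.
  unfold bw. field. apply pow_nonzero; lra.
Qed.

Lemma Arpow_binomial n y : Arpow n y = fun k =>
  psum (fun j => C n j * (2 ^ j * (-2) ^ (n - j) * Wpow j y k)) (S n).
Proof.
  induction n.
  { apply functional_extensionality; intros k. simpl. rewrite C_n_0. ring. }
  apply functional_extensionality; intros k.
  change (Arpow (S n) y k) with (Ar (Arpow n y) k). rewrite Ar_as_Wr, IHn.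
  rewrite (linear_op_psum Wr Wr_linear (fun j k => C n j * (2 ^ j * (-2) ^ (n - j) * Wpow j y k))).
  rewrite (psum_pascal (fun l => 2 ^ l * (-2) ^ (S n - l) * Wpow l y k)).
  rewrite (psum_ext (fun j => Wr (fun k0 => C n j * (2 ^ j * (-2) ^ (n - j) * Wpow j y k0)) k)
             (fun l => / 2 * (C n l * (2 ^ S l * (-2) ^ (S n - S l) * Wpow (S l) y k)))).
  2:{ intros i Hi.
      replace (fun k0 => C n i * (2 ^ i * (-2) ^ (n - i) * Wpow i y k0))
        with (fun k0 => C n i * (2 ^ i * (-2) ^ (n - i)) * Wpow i y k0)
        by (apply functional_extensionality; intros; ring).
      rewrite (linear_op_scal Wr Wr_linear _ (Wpow i y)).
      change (Wr (Wpow i y) k) with (Wpow (S i) y k). simpl (S n - S i)%nat. simpl pow. field. }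
  rewrite (psum_ext (fun l => C n l * (2 ^ l * (-2) ^ (S n - l) * Wpow l y k))
             (fun j => (-2) * (C n j * (2 ^ j * (-2) ^ (n - j) * Wpow j y k)))).
  2:{ intros i Hi. replace (S n - i)%nat with (S (n - i)) by lia. simpl pow. ring. }
  rewrite !psum_scal. field.
Qed.

Lemma Arpow_bounded n y B : bounded_by y B -> bounded_by (Arpow n y) (2 ^ n * B).
Proof.
  intros Hy. induction n; [simpl; rewrite Rmult_1_l; auto|].
  change (bounded_by (Ar (Arpow n y)) (2 ^ S n * B)).
  replace (2 ^ S n * B) with (2 * (2 ^ n * B)) by (simpl; ring). apply Ar_bounded; auto.
Qed.

(** * The Ritt estimate for the lazy walk *)

(* [bw n] moved one step to the right and padded to the support of [bw (n+2)]. *)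
Definition bw_shift (n l : nat) : R :=
  match l with O => 0 | S m => if Nat.leb m n then bw n m else 0 end.

Lemma bw_shift_nonneg n l : 0 <= bw_shift n l.
Proof. destruct l; simpl; [lra|]. destruct (Nat.leb l n); [apply bw_nonneg | lra]. Qed.

Lemma psum_bw_shift n z : psum (fun l => bw_shift n l * z l) (S (S (S n))) =
  psum (fun i => bw n i * z (S i)) (S n).
Proof.
  rewrite psum_first. simpl (bw_shift n 0).
  change (psum (fun i => bw_shift n (S i) * z (S i)) (S (S n))) with
   (psum (fun i => bw_shift n (S i) * z (S i)) (S n) + bw_shift n (S (S n)) * z (S (S n))).
  replace (bw_shift n (S (S n))) with 0.
  2:{ unfold bw_shift. rewrite (proj2 (Nat.leb_gt (S n) n)) by lia. reflexivity. }
  rewrite (psum_ext (fun i => bw_shift n (S i) * z (S i)) (fun i => bw n i * z (S i))); [ring|].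
  intros i Hi. unfold bw_shift. rewrite (proj2 (Nat.leb_le i n)) by lia. reflexivity.
Qed.

Lemma bw_shift_mass n : psum (bw_shift n) (S (S (S n))) = 1.
Proof.
  rewrite (psum_ext _ (fun l => bw_shift n l * 1)) by (intros; ring).
  rewrite psum_bw_shift, (psum_ext _ (bw n)) by (intros; ring). apply bw_mass.
Qed.

(* From C(n+2,m+1) (m+1)(n-m+1) = (n+2)(n+1) C(n,m) and 4(m+1)(n-m+1) <= (n+2)^2. *)
Lemma bw_shift_excess n l : bw_shift n l - bw (S (S n)) l <= bw_shift n l / INR (S (S n)).
Proof.
  assert (Hv := bw_nonneg (S (S n)) l).
  assert (HN : 0 < INR (S (S n))) by (apply lt_0_INR; lia).
  destruct l as [|m]; simpl bw_shift.
  { unfold Rdiv; rewrite Rmult_0_l. lra. }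
  destruct (Nat.leb m n) eqn:E; [|unfold Rdiv; rewrite Rmult_0_l; lra].
  apply Nat.leb_le in E.
  set (w := bw n m) in *. set (v := bw (S (S n)) (S m)) in *.
  assert (Hw : 0 <= w) by apply bw_nonneg.
  set (a := INR (S m)). set (b := INR (S (n - m))).
  assert (Ha : 0 < a) by (apply lt_0_INR; lia).
  assert (Hb : 0 < b) by (apply lt_0_INR; lia).
  assert (Hab : a + b = INR (S (S n))) by (unfold a, b; rewrite <- plus_INR; f_equal; lia).
  assert (Hn1 : INR (S (S n)) = INR (S n) + 1) by (rewrite S_INR; ring).
  assert (Hrel : 4 * v * a * b = INR (S (S n)) * INR (S n) * w).
  { unfold v, w, bw.
    replace (4 * (C (S (S n)) (S m) / 2 ^ S (S n)) * a * b)
      with (C (S (S n)) (S m) * a * b / 2 ^ n) by (simpl pow; field; apply pow_nonzero; lra).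
    unfold a, b. rewrite C_SS_S by auto. field. apply pow_nonzero; lra. }
  assert (Hamgm : 4 * a * b <= INR (S (S n)) * INR (S (S n))).
  { rewrite <- Hab. pose proof (Rle_0_sqr (a - b)). unfold Rsqr in *. nra. }
  assert (Hk : w * INR (S n) <= v * INR (S (S n))).
  { apply (Rmult_le_reg_r (INR (S (S n)) * INR (S (S n)))); [nra|].
    assert (v * INR (S (S n)) * (4 * a * b) <= v * INR (S (S n)) * (INR (S (S n)) * INR (S (S n))))
      by (apply Rmult_le_compat_l; nra).
    nra. }
  apply (Rmult_le_reg_r (INR (S (S n)))); auto. unfold Rdiv.
  rewrite Rmult_assoc, Rinv_l by lra. nra.
Qed.

(* Both weight vectors have mass 1, so the l^1 distance is twice the total positive excess. *)
Lemma bw_shift_dist n :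
  psum (fun l => Rabs (bw_shift n l - bw (S (S n)) l)) (S (S (S n))) <= 2 / INR (S (S n)).
Proof.
  set (e := fun l => bw_shift n l - bw (S (S n)) l).
  assert (HN : 0 < INR (S (S n))) by (apply lt_0_INR; lia).
  assert (He : psum e (S (S (S n))) = 0)
    by (unfold e; rewrite psum_minus, bw_shift_mass, bw_mass; ring).
  rewrite (psum_ext (fun l => Rabs (e l)) (fun l => 2 * Rmax (e l) 0 - e l)).
  2:{ intros. unfold Rmax. destruct (Rle_dec (e i) 0);
      [rewrite Rabs_left1 | rewrite Rabs_right]; lra. }
  rewrite psum_minus, He, psum_scal.
  assert (psum (fun l => Rmax (e l) 0) (S (S (S n))) <= / INR (S (S n))).
  { rewrite <- (Rmult_1_r (/ _)), <- (bw_shift_mass n), <- psum_scal.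
    apply psum_le. intros. apply Rmax_lub.
    - rewrite Rmult_comm. apply bw_shift_excess.
    - apply Rmult_le_pos; [left; apply Rinv_0_lt_compat; auto | apply bw_shift_nonneg]. }
  unfold Rdiv. lra.
Qed.

Lemma Wpow_step_bound j y B : bounded_by y B -> forall k,
  Rabs (Wpow (S j) y k - Wpow j y k) <= B / INR (S j).
Proof.
  intros Hy k. set (n := (2 * j)%nat).
  set (z := fun l : nat => y (k + Z.of_nat j + 1 - Z.of_nat l)%Z).
  assert (E1 : Wpow (S j) y k = psum (fun l => bw (S (S n)) l * z l) (S (S (S n)))).
  { rewrite Wpow_binomial. replace (2 * S j)%nat with (S (S n)) by (unfold n; lia).
    apply psum_ext; intros. unfold z. do 2 f_equal. lia. }
  assert (E2 : Wpow j y k = psum (fun l => bw_shift n l * z l) (S (S (S n)))).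
  { rewrite psum_bw_shift, Wpow_binomial. apply psum_ext; intros. unfold z. do 2 f_equal. lia. }
  assert (HB := bounded_by_nonneg y B Hy).
  rewrite E1, E2, <- psum_minus.
  eapply Rle_trans; [apply psum_abs|].
  eapply Rle_trans.
  { apply (psum_le _ (fun l => B * Rabs (bw_shift n l - bw (S (S n)) l))).
    intros l _. replace (bw (S (S n)) l * z l - bw_shift n l * z l)
      with (- (bw_shift n l - bw (S (S n)) l) * z l) by ring.
    rewrite Rabs_mult, Rabs_Ropp, (Rmult_comm B).
    apply Rmult_le_compat_l; [apply Rabs_pos | apply Hy]. }
  rewrite psum_scal.
  replace (B / INR (S j)) with (B * (2 / INR (S (S n)))).
  2:{ unfold n. rewrite !S_INR, mult_INR, S_INR. simpl. field. pose proof (pos_INR j). lra. }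
  apply Rmult_le_compat_l; auto. apply bw_shift_dist.
Qed.

(** * Poisson weights and the semigroup exp(tA) *)

Definition exp_term (s : R) (j : nat) : R := s ^ j / INR (fact j).
Definition poisson (s : R) (j : nat) : R := exp (- s) * exp_term s j.

Lemma exp_term_series s : is_series (exp_term s) (exp s).
Proof.
  generalize (is_exp_Reals s). unfold is_pseries. apply is_series_ext.
  intros n. unfold exp_term. rewrite pow_n_pow.
  unfold scal; simpl. unfold mult; simpl. unfold Rdiv; ring.
Qed.

Lemma exp_term_nonneg s j : 0 <= s -> 0 <= exp_term s j.
Proof. intros. apply Rle_mult_inv_pos; [apply pow_le; auto | apply INR_fact_lt_0]. Qed.

Lemma poisson_series s : is_series (poisson s) 1.
Proof.
  replace 1 with (exp (- s) * exp s) by (rewrite <- exp_plus, Rplus_opp_l; apply exp_0).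
  exact (is_series_scal_l (exp (- s)) _ _ (exp_term_series s)).
Qed.

Lemma poisson_nonneg s j : 0 <= s -> 0 <= poisson s j.
Proof. intros. apply Rmult_le_pos; [left; apply exp_pos | apply exp_term_nonneg; auto]. Qed.

Lemma poisson_mean_series s : is_series (fun j => poisson s j * INR j) s.
Proof.
  apply is_series_decr_1.
  match goal with
  | |- is_series _ ?l => replace l with (s * 1) by (simpl; unfold plus, opp; simpl; ring)
  end.
  apply (is_series_ext (fun j => s * poisson s j));
    [|exact (is_series_scal_l s _ _ (poisson_series s))].
  intros n. change (s * poisson s n = poisson s (S n) * INR (S n)).
  unfold poisson, exp_term. change (fact (S n)) with (S n * fact n)%nat.
  rewrite mult_INR. simpl pow. field. split; [apply INR_fact_neq_0 | apply not_0_INR; lia].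
Qed.

Lemma poisson_harmonic_series s : 0 < s ->
  is_series (fun j => poisson s j / INR (S j)) (exp (- s) / s * (exp s - 1)).
Proof.
  intros Hs.
  assert (H1 : is_series (fun j => exp_term s (S j)) (exp s - 1)).
  { apply is_series_incr_1.
    match goal with
    | |- is_series _ ?l => replace l with (exp s) by (unfold exp_term, plus; simpl; field)
    end.
    apply exp_term_series. }
  apply (is_series_ext (fun j => exp (- s) / s * exp_term s (S j)));
    [|exact (is_series_scal_l (exp (- s) / s) _ _ H1)].
  intros n. change (exp (- s) / s * exp_term s (S n) = poisson s n / INR (S n)).
  unfold poisson, exp_term. change (fact (S n)) with (S n * fact n)%nat.
  rewrite mult_INR. simpl pow. field.
  split; [apply INR_fact_neq_0 | split; [apply not_0_INR; lia | lra]].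
Qed.

Lemma poisson_harmonic_bound s : 0 < s -> exp (- s) / s * (exp s - 1) <= / s.
Proof.
  intros Hs. assert (0 < exp (- s)) by apply exp_pos.
  replace (exp (- s) / s * (exp s - 1)) with ((exp (- s) * exp s - exp (- s)) / s) by (field; lra).
  rewrite <- exp_plus, Rplus_opp_l, exp_0.
  unfold Rdiv. assert (0 < / s) by (apply Rinv_0_lt_compat; auto). nra.
Qed.

Lemma series_dominated (f g : nat -> R) (l : R) : (forall j, Rabs (f j) <= g j) -> is_series g l ->
  ex_series f /\ Rabs (Series f) <= l.
Proof.
  intros H Hg. assert (Eg : ex_series g) by (exists l; auto).
  assert (Ea : ex_series (fun j => Rabs (f j))).
  { apply (@ex_series_le R_AbsRing R_CompleteNormedModule _ g); auto.
    intros n. change (Rabs (Rabs (f n)) <= g n). rewrite Rabs_Rabsolu; auto. }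
  split; [apply (ex_series_le f g); auto|].
  eapply Rle_trans; [apply Series_Rabs; auto|].
  rewrite <- (is_series_unique g l Hg). apply Series_le; auto.
  intros; split; auto; apply Rabs_pos.
Qed.

(* The tail of [f] is controlled by the tail of the dominating series [g] alone, so [N0]
   does not depend on [f]. *)
Lemma psum_tail_uniform (g : nat -> R) (l : R) : is_series g l ->
  forall eps, 0 < eps -> exists N0, forall N, (N0 <= N)%nat -> forall f : nat -> R,
  (forall j, Rabs (f j) <= g j) -> Rabs (psum f (S N) - Series f) <= eps.
Proof.
  intros Hg eps He. destruct (proj1 (is_series_Reals _ _) Hg eps He) as [N0 HN0].
  exists N0. intros N HN f Hf.
  assert (Htail : is_series (fun i => g (S N + i)%nat) (l - sum_f_R0 g N)).
  { apply is_series_incr_n; [lia|]. simpl Init.Nat.pred. rewrite sum_n_Reals.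
    match goal with |- is_series _ ?l' => replace l' with l; [exact Hg|] end.
    change (l = l - sum_f_R0 g N + sum_f_R0 g N). ring. }
  destruct (series_dominated (fun i => f (S N + i)%nat) _ _ (fun i => Hf (S N + i)%nat) Htail)
    as [_ Hle].
  rewrite (Series_incr_n f (S N)) by (try lia; exact (proj1 (series_dominated f g l Hf Hg))).
  simpl Init.Nat.pred. rewrite <- psum_sum_f_R0.
  replace (psum f (S N) - (psum f (S N) + Series (fun k => f (S N + k)%nat)))
    with (- Series (fun k => f (S N + k)%nat)) by ring.
  rewrite Rabs_Ropp. eapply Rle_trans; [apply Hle|].
  specialize (HN0 N HN). unfold R_dist in HN0. rewrite Rabs_minus_sym in HN0.
  apply Rabs_def2 in HN0. lra.
Qed.

(* This is exp(tA) = exp(-2t) exp(2tW), since A = 2W - 2I. *)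
Definition expA (t : R) (y : seqZ) : seqZ :=
  fun k => Series (fun j => poisson (2 * t) j * Wpow j y k).

Lemma Ar_Series (F : nat -> seqZ) k : (forall k, ex_series (fun j => F j k)) ->
  Ar (fun k => Series (fun j => F j k)) k = Series (fun j => Ar (F j) k).
Proof.
  intros H. unfold Ar, Tr, avg2.
  rewrite Series_minus, Series_scal_l, Series_plus; auto.
  exact (ex_series_scal_l (/ 2) _ (ex_series_plus _ _ (H _) (H _))).
Qed.

Section Semigroup.
Variable t : R.
Hypothesis Ht : 0 <= t.

Lemma expA_term_bound y B k j : bounded_by y B ->
  Rabs (poisson (2 * t) j * Wpow j y k) <= poisson (2 * t) j * B.
Proof.
  intros Hy. rewrite Rabs_mult, Rabs_right by (apply Rle_ge, poisson_nonneg; lra).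
  apply Rmult_le_compat_l; [apply poisson_nonneg; lra | apply Wpow_nonexpansive; auto].
Qed.

Lemma expA_ex y B k : bounded_by y B -> ex_series (fun j => poisson (2 * t) j * Wpow j y k).
Proof.
  intros Hy. apply (proj1 (series_dominated _ _ _ (fun j => expA_term_bound y B k j Hy)
                            (is_series_scal_r B _ _ (poisson_series _)))).
Qed.

Lemma expA_bounded y B : bounded_by y B -> bounded_by (expA t y) B.
Proof.
  intros Hy k. rewrite <- (Rmult_1_l B).
  apply (proj2 (series_dominated _ _ _ (fun j => expA_term_bound y B k j Hy)
                  (is_series_scal_r B _ _ (poisson_series _)))).
Qed.

Lemma expA_minus f g Bf Bg : bounded_by f Bf -> bounded_by g Bg ->
  expA t (fun k => f k - g k) = fun k => expA t f k - expA t g k.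
Proof.
  intros Hf Hg. apply functional_extensionality; intros k. unfold expA.
  rewrite <- Series_minus by (eapply expA_ex; eauto).
  apply Series_ext; intros j.
  replace (fun k => f k - g k) with (fun k => 1 * f k + (-1) * g k)
    by (apply functional_extensionality; intros; ring).
  rewrite (Wpow_linear j). ring.
Qed.

Lemma expA_const c k : expA t (fun _ => c) k = c.
Proof.
  unfold expA. rewrite (Series_ext _ (fun j => poisson (2 * t) j * c))
    by (intros; rewrite Wpow_const; reflexivity).
  rewrite Series_scal_r, (is_series_unique _ _ (poisson_series _)). ring.
Qed.

Lemma expA_sub_const y B c k : bounded_by y B -> expA t (fun k => y k - c) k = expA t y k - c.
Proof.
  intros Hy. rewrite (expA_minus y (fun _ => c) B (Rabs c)); auto.
  - rewrite expA_const. reflexivity.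
  - intros ?; apply Rle_refl.
Qed.

(* The integral of exp(sA) y over [0,t]. *)
Definition expA_primitive (y : seqZ) : seqZ :=
  fun k => Series (fun j => poisson (2 * t) j * (/ 2 * psum (fun i => Wpow i y k) j)).

Lemma expA_primitive_term_bound y B k j : bounded_by y B ->
  Rabs (poisson (2 * t) j * (/ 2 * psum (fun i => Wpow i y k) j)) <=
  poisson (2 * t) j * INR j * (B / 2).
Proof.
  intros Hy. rewrite Rabs_mult, Rabs_right by (apply Rle_ge, poisson_nonneg; lra).
  rewrite Rmult_assoc. apply Rmult_le_compat_l; [apply poisson_nonneg; lra|].
  rewrite Rabs_mult, Rabs_right by lra.
  assert (Rabs (psum (fun i => Wpow i y k) j) <= INR j * B)
    by (apply psum_abs_bound; intros; apply Wpow_nonexpansive; auto).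
  lra.
Qed.

Lemma expA_primitive_bounded y B : bounded_by y B -> bounded_by (expA_primitive y) (t * B).
Proof.
  intros Hy k. replace (t * B) with (2 * t * (B / 2)) by field.
  apply (proj2 (series_dominated _ _ _ (fun j => expA_primitive_term_bound y B k j Hy)
                  (is_series_scal_r _ _ _ (poisson_mean_series _)))).
Qed.

Lemma Ar_expA_primitive y B k : bounded_by y B -> Ar (expA_primitive y) k = expA t y k - y k.
Proof.
  intros Hy. unfold expA_primitive.
  rewrite Ar_Series.
  2:{ intros k'.
      apply (proj1 (series_dominated _ _ _ (fun j => expA_primitive_term_bound y B k' j Hy)
                                  (is_series_scal_r _ _ _ (poisson_mean_series _)))). }
  rewrite <- (expA_const (y k) k). unfold expA.
  rewrite (Series_ext (fun j => poisson (2 * t) j * Wpow j (fun _ => y k) k)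
             (fun j => poisson (2 * t) j * y k)) by (intros; rewrite Wpow_const; reflexivity).
  rewrite <- Series_minus.
  2:{ eapply expA_ex; eauto. }
  2:{ exists (1 * y k). apply (is_series_scal_r (y k) _ _ (poisson_series _)). }
  apply Series_ext; intros j.
  rewrite (linear_op_scal Ar Ar_linear (poisson (2 * t) j)), (linear_op_scal Ar Ar_linear (/ 2)).
  rewrite (linear_op_psum Ar Ar_linear (fun i => Wpow i y)).
  rewrite (psum_ext (fun i => Ar (Wpow i y) k) (fun i => 2 * (Wpow (S i) y k - Wpow i y k))).
  2:{ intros. rewrite Ar_as_Wr. simpl. ring. }
  rewrite psum_scal, (psum_telescope (fun i => Wpow i y k)). simpl. field.
Qed.

Lemma exp_term_binomial_split n j : (j <= n)%nat ->
  t ^ n / INR (fact n) * (C n j * (2 ^ j * (-2) ^ (n - j))) =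
  exp_term (2 * t) j * exp_term (- (2 * t)) (n - j).
Proof.
  intros H. replace n with (j + (n - j))%nat at 1 2 3 by lia. set (m := (n - j)%nat).
  unfold C, exp_term. replace (j + m - j)%nat with m by lia.
  rewrite pow_add, !Rpow_mult_distr. replace (- (2 * t)) with ((-2) * t) by ring.
  rewrite Rpow_mult_distr. field. repeat split; apply INR_fact_neq_0.
Qed.

(* Cauchy product of the series of exp(2t) exp(2tW) and of exp(-2t). *)
Lemma exp_series_expA y B k : bounded_by y B ->
  is_series (fun n => t ^ n / INR (fact n) * Arpow n y k) (expA t y k).
Proof.
  intros Hy. set (a := fun j => exp_term (2 * t) j * Wpow j y k).
  assert (Ha : forall j, Rabs (a j) <= exp_term (2 * t) j * B).
  { intros j. unfold a. rewrite Rabs_mult, Rabs_right by (apply Rle_ge, exp_term_nonneg; lra).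
    apply Rmult_le_compat_l; [apply exp_term_nonneg; lra | apply Wpow_nonexpansive; auto]. }
  assert (Hb : forall m, Rabs (exp_term (- (2 * t)) m) = exp_term (2 * t) m).
  { intros m. unfold exp_term, Rdiv. rewrite Rabs_mult, Rabs_inv, <- RPow_abs, Rabs_Ropp.
    rewrite (Rabs_right (2 * t)) by lra. rewrite (Rabs_right (INR _)) by (apply Rle_ge, pos_INR).
    reflexivity. }
  assert (Eb : ex_series (fun m => Rabs (exp_term (- (2 * t)) m))).
  { exists (exp (2 * t)).
    apply (is_series_ext (exp_term (2 * t))); [intros; rewrite Hb; auto | apply exp_term_series]. }
  assert (Ea : ex_series (fun j => Rabs (a j))).
  { assert (Ha' : forall j, Rabs (Rabs (a j)) <= exp_term (2 * t) j * B)
      by (intros j; rewrite Rabs_Rabsolu; auto).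
    exact (proj1 (series_dominated _ _ _ Ha' (is_series_scal_r B _ _ (exp_term_series _)))). }
  assert (Ea' : ex_series a) by (apply ex_series_Rabs; auto).
  pose proof (is_series_mult a (exp_term (- (2 * t))) _ _
                (Series_correct _ Ea') (exp_term_series _) Ea Eb) as H.
  replace (expA t y k) with (Series a * exp (- (2 * t))).
  2:{ unfold expA, poisson. rewrite <- Series_scal_r. apply Series_ext; intros; unfold a; ring. }
  revert H. apply is_series_ext. intros n.
  change (sum_f_R0 (fun j => a j * exp_term (- (2 * t)) (n - j)) n =
          t ^ n / INR (fact n) * Arpow n y k).
  rewrite <- psum_sum_f_R0, Arpow_binomial, <- psum_scal.
  apply psum_ext; intros j Hj. unfold a.
  transitivity (exp_term (2 * t) j * exp_term (- (2 * t)) (n - j) * Wpow j y k); [ring|].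
  rewrite <- (exp_term_binomial_split n j) by lia. ring.
Qed.

Lemma exp_partial_expA_uniform y B : bounded_by y B ->
  forall eps, 0 < eps -> exists N0, forall N, (N0 <= N)%nat -> forall k,
  Rabs (psum (fun n => t ^ n / INR (fact n) * Arpow n y k) (S N) - expA t y k) <= eps.
Proof.
  intros Hy eps He.
  destruct (psum_tail_uniform _ _ (is_series_scal_r B _ _ (exp_term_series (2 * t))) eps He)
    as [N0 HN0].
  exists N0. intros N HN k.
  rewrite <- (is_series_unique _ _ (exp_series_expA y B k Hy)).
  apply HN0; auto. intros n.
  assert (Hc : 0 <= t ^ n / INR (fact n))
    by (apply Rle_mult_inv_pos; [apply pow_le | apply INR_fact_lt_0]; lra).
  rewrite Rabs_mult, Rabs_right by lra.
  unfold exp_term. rewrite Rpow_mult_distr.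
  replace (2 ^ n * t ^ n / INR (fact n) * B) with (t ^ n / INR (fact n) * (2 ^ n * B))
    by (unfold Rdiv; ring).
  apply Rmult_le_compat_l; auto.
  apply Arpow_bounded; auto.
Qed.

End Semigroup.

(* Ritt: the weights poisson(2t) j / (j+1) sum to at most 1/(2t). *)
Lemma poisson_Wpow_step_bound t y B k : 0 < t -> bounded_by y B ->
  Rabs (Series (fun j => poisson (2 * t) j * (2 * (Wpow (S j) y k - Wpow j y k)))) <= B / t.
Proof.
  intros Htp Hy. assert (Hs : 0 < 2 * t) by lra.
  assert (HB := bounded_by_nonneg y B Hy).
  assert (Hterms : forall j, Rabs (poisson (2 * t) j * (2 * (Wpow (S j) y k - Wpow j y k))) <=
                             poisson (2 * t) j / INR (S j) * (2 * B)).
  { intros j. assert (Hp := poisson_nonneg (2 * t) j ltac:(lra)).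
    rewrite !Rabs_mult, Rabs_right, (Rabs_right 2) by lra.
    assert (H := Wpow_step_bound j y B Hy k). unfold Rdiv in *.
    replace (poisson (2 * t) j * / INR (S j) * (2 * B))
      with (poisson (2 * t) j * (2 * (B * / INR (S j)))) by ring.
    apply Rmult_le_compat_l; lra. }
  eapply Rle_trans.
  { apply (proj2 (series_dominated _ _ _ Hterms
                    (is_series_scal_r (2 * B) _ _ (poisson_harmonic_series _ Hs)))). }
  assert (H := poisson_harmonic_bound (2 * t) Hs).
  replace (B / t) with (/ (2 * t) * (2 * B)) by (field; lra).
  apply Rmult_le_compat_r; lra.
Qed.

Lemma expA_Ar_bound t y B k : 0 < t -> bounded_by y B -> Rabs (expA t (Ar y) k) <= B / t.
Proof.
  intros Htp Hy. unfold expA.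
  rewrite (Series_ext _ (fun j => poisson (2 * t) j * (2 * (Wpow (S j) y k - Wpow j y k)))).
  - apply poisson_Wpow_step_bound; auto.
  - intros j; rewrite Wpow_Ar; ring.
Qed.

Lemma Ar_expA_bound t y B k : 0 < t -> bounded_by y B -> Rabs (Ar (expA t y) k) <= B / t.
Proof.
  intros Htp Hy. unfold expA. rewrite Ar_Series by (intros; eapply expA_ex; eauto; lra).
  rewrite (Series_ext _ (fun j => poisson (2 * t) j * (2 * (Wpow (S j) y k - Wpow j y k)))).
  - apply poisson_Wpow_step_bound; auto.
  - intros j. rewrite (linear_op_scal Ar Ar_linear (poisson (2 * t) j) (Wpow j y)), Ar_as_Wr.
    simpl. ring.
Qed.

(** * Cesaro means *)

Definition cesaro_mean (n : nat) (z : seqZ) : seqZ :=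
  fun k => / INR n * psum (fun j => Tpow (S j) z k) n.

(* Y_N with A Y_N = M_N - I, where M_N = cesaro_mean N. *)
Definition mean_potential (N : nat) (z : seqZ) : seqZ :=
  fun k => / INR N * psum (fun j => psum (fun i => Tpow i z k) (S j)) N.

Lemma cesaro_mean_minus n f g :
  cesaro_mean n (fun k => f k - g k) = fun k => cesaro_mean n f k - cesaro_mean n g k.
Proof.
  apply functional_extensionality; intros k. unfold cesaro_mean.
  rewrite (psum_ext _ (fun j => Tpow (S j) f k - Tpow (S j) g k)), psum_minus; [ring|].
  intros i _. replace (fun k => f k - g k) with (fun k => 1 * f k + (-1) * g k)
    by (apply functional_extensionality; intros; ring).
  rewrite (Tpow_linear (S i)). ring.
Qed.

Lemma cesaro_mean_sub_const n z c k : (1 <= n)%nat ->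
  cesaro_mean n (fun k => z k - c) k = cesaro_mean n z k - c.
Proof.
  intros Hn. rewrite (cesaro_mean_minus n z (fun _ => c)). f_equal.
  unfold cesaro_mean. rewrite (psum_ext _ (fun _ => c)) by (intros; rewrite Tpow_const; auto).
  rewrite psum_const. field. apply not_0_INR; lia.
Qed.

Lemma cesaro_mean_nonexpansive n : nonexpansive (cesaro_mean n).
Proof.
  intros g E H k. unfold cesaro_mean. assert (HE := bounded_by_nonneg g E H).
  destruct n; [simpl; rewrite Rmult_0_r, Rabs_R0; auto|].
  assert (HN : 0 < INR (S n)) by (apply lt_0_INR; lia).
  assert (Rabs (psum (fun j => Tpow (S j) g k) (S n)) <= INR (S n) * E)
    by (apply psum_abs_bound; intros; apply Tpow_nonexpansive; auto).
  rewrite Rabs_mult, Rabs_inv, Rabs_right by lra.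
  apply (Rmult_le_reg_l (INR (S n))); auto. rewrite <- Rmult_assoc, Rinv_r by lra. lra.
Qed.

Lemma cesaro_mean_Ar_bound n w B k : (1 <= n)%nat -> bounded_by w B ->
  Rabs (cesaro_mean n (Ar w) k) <= 2 * B / INR n.
Proof.
  intros Hn Hw. unfold cesaro_mean.
  rewrite (psum_ext _ (fun j => Tpow (S (S j)) w k - Tpow (S j) w k)).
  2:{ intros j _. unfold Ar.
      replace (fun k0 => Tr w k0 - w k0) with (fun k0 => 1 * Tr w k0 + (-1) * w k0)
        by (apply functional_extensionality; intros; ring).
      rewrite (Tpow_linear (S j)). unfold Tpow. rewrite <- (Nat.iter_succ_r (S j)). simpl. ring. }
  rewrite (psum_telescope (fun j => Tpow (S j) w k)).
  assert (Rabs (Tpow (S n) w k - Tpow 1 w k) <= 2 * B).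
  { eapply Rle_trans; [apply Rabs_minus_le|].
    pose proof (Tpow_nonexpansive (S n) w B Hw k). pose proof (Tpow_nonexpansive 1 w B Hw k). lra. }
  assert (0 < INR n) by (apply lt_0_INR; lia).
  rewrite Rabs_mult, Rabs_inv, (Rabs_right (INR n)) by lra.
  unfold Rdiv. rewrite Rmult_comm.
  apply Rmult_le_compat_r; auto. left; apply Rinv_0_lt_compat; auto.
Qed.

Lemma Ar_mean_potential N z k : (1 <= N)%nat -> Ar (mean_potential N z) k = cesaro_mean N z k - z k.
Proof.
  intros HN. unfold mean_potential.
  rewrite (linear_op_scal Ar Ar_linear (/ INR N)).
  rewrite (linear_op_psum Ar Ar_linear (fun j k0 => psum (fun i => Tpow i z k0) (S j))).
  rewrite (psum_ext _ (fun j => Tpow (S j) z k - z k)).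
  2:{ intros j _. rewrite (linear_op_psum Ar Ar_linear (fun i => Tpow i z)).
      apply (psum_telescope (fun i => Tpow i z k)). }
  rewrite psum_minus, psum_const. unfold cesaro_mean. field. apply not_0_INR; lia.
Qed.

Lemma mean_potential_bounded N z D :
  (forall j k, (j < N)%nat -> Rabs (psum (fun i => Tpow i z k) (S j)) <= D) -> 0 <= D ->
  bounded_by (mean_potential N z) D.
Proof.
  intros H HD k. unfold mean_potential. destruct N; [simpl; rewrite Rmult_0_r, Rabs_R0; auto|].
  assert (0 < INR (S N)) by (apply lt_0_INR; lia).
  assert (Rabs (psum (fun j => psum (fun i => Tpow i z k) (S j)) (S N)) <= INR (S N) * D)
    by (apply psum_abs_bound; intros; apply H; auto).
  rewrite Rabs_mult, Rabs_inv, Rabs_right by lra.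
  apply (Rmult_le_reg_l (INR (S N))); auto. rewrite <- Rmult_assoc, Rinv_r by lra. lra.
Qed.

(* z = M_N z - A Y_N, and exp(tA) A is O(1/t). *)
Lemma expA_mean_potential_split t z Bz N D k : 0 < t -> bounded_by z Bz -> (1 <= N)%nat ->
  bounded_by (mean_potential N z) D ->
  Rabs (expA t z k) <= Rabs (expA t (cesaro_mean N z) k) + D / t.
Proof.
  intros Ht Hz HN HD.
  replace z with (fun k => cesaro_mean N z k - Ar (mean_potential N z) k) at 1
    by (apply functional_extensionality; intros k'; rewrite Ar_mean_potential by auto; ring).
  rewrite (expA_minus t ltac:(lra) _ _ Bz (2 * D)).
  - eapply Rle_trans; [apply Rabs_minus_le|].
    pose proof (expA_Ar_bound t _ _ k Ht HD). lra.
  - apply cesaro_mean_nonexpansive; auto.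
  - apply Ar_bounded; auto.
Qed.

Definition tendsto_unif_t (u : R -> seqZ) (c : seqZ) : Prop :=
  forall eps, 0 < eps -> exists T, forall t, T <= t -> 0 <= t ->
  forall k, Rabs (u t k - c k) <= eps.

Definition tendsto_unif_n (u : nat -> seqZ) (c : R) : Prop :=
  forall eps, 0 < eps -> exists N0, forall n, (N0 <= n)%nat -> (1 <= n)%nat ->
  forall k, Rabs (u n k - c) <= eps.

Theorem expA_tendsto_of_cesaro y B c : bounded_by y B ->
  tendsto_unif_n (fun n => cesaro_mean n y) c -> tendsto_unif_t (fun t => expA t y) (fun _ => c).
Proof.
  intros Hy Hc eps He. set (z := fun k => y k - c). set (Bz := B + Rabs c).
  assert (Hz : bounded_by z Bz) by (apply bounded_by_sub_const; auto).
  assert (HBz := bounded_by_nonneg _ _ Hz).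
  destruct (Hc (eps / 2)) as [N0 HN0]; [lra|].
  set (N := S N0). assert (HN : 0 < INR N) by (apply lt_0_INR; lia).
  assert (HY : bounded_by (mean_potential N z) (INR N * Bz)).
  { apply mean_potential_bounded; [|nra]. intros j k Hj.
    eapply Rle_trans; [apply psum_abs_bound; intros; apply Tpow_nonexpansive, Hz|].
    apply Rmult_le_compat_r; auto. apply le_INR; lia. }
  assert (HM : bounded_by (cesaro_mean N z) (eps / 2)).
  { intros k. unfold z. rewrite cesaro_mean_sub_const by (unfold N; lia).
    apply HN0; unfold N; lia. }
  exists (2 * INR N * Bz / eps + 1). intros t Ht Ht0 k.
  assert (HT0 : 0 <= 2 * INR N * Bz / eps) by (apply Rle_mult_inv_pos; nra).
  assert (Htp : 0 < t) by lra.
  rewrite <- (expA_sub_const t Ht0 y B c k Hy). fold z.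
  eapply Rle_trans; [apply (expA_mean_potential_split t z Bz N (INR N * Bz)); auto; unfold N; lia|].
  assert (Rabs (expA t (cesaro_mean N z) k) <= eps / 2) by (apply expA_bounded; auto).
  assert (INR N * Bz / t <= eps / 2).
  { apply (Rmult_le_reg_r t); auto. unfold Rdiv. rewrite Rmult_assoc, Rinv_l by lra.
    assert (2 * INR N * Bz / eps * eps = 2 * INR N * Bz) by (field; lra). nra. }
  lra.
Qed.

Lemma psum_Tpow_cesaro_mean z j k :
  psum (fun i => Tpow i z k) (S (S j)) = z k + INR (S j) * cesaro_mean (S j) z k.
Proof.
  rewrite psum_first. change (Tpow 0 z k) with (z k). unfold cesaro_mean. field.
  apply not_0_INR; lia.
Qed.

Lemma psum_Tpow_bound_of_rate z Bz K N0 : bounded_by z Bz ->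
  (forall n k, (N0 <= n)%nat -> (1 <= n)%nat -> INR n * Rabs (cesaro_mean n z k) <= Rabs K) ->
  forall j k, Rabs (psum (fun i => Tpow i z k) (S j)) <= Bz + Rabs K + INR N0 * Bz.
Proof.
  intros Hz Hmean j k.
  assert (HBz := bounded_by_nonneg _ _ Hz). assert (HK := Rabs_pos K). assert (HN0 := pos_INR N0).
  destruct (le_lt_dec N0 j) as [Hj|Hj].
  - destruct j as [|j].
    + simpl. rewrite Rplus_0_l. pose proof (Hz k). nra.
    + rewrite psum_Tpow_cesaro_mean. eapply Rle_trans; [apply Rabs_triang|].
      rewrite Rabs_mult, (Rabs_right (INR (S j))) by (apply Rle_ge, pos_INR).
      pose proof (Hz k). pose proof (Hmean (S j) k Hj ltac:(lia)). nra.
  - eapply Rle_trans; [apply psum_abs_bound; intros; apply Tpow_nonexpansive, Hz|].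
    assert (INR (S j) <= INR N0) by (apply le_INR; lia). nra.
Qed.

(* Under the rate hypothesis the potentials Y_N (y - c) are bounded uniformly in N. *)
Theorem expA_rate_of_cesaro_rate y B c K N0 : bounded_by y B ->
  (forall n, (N0 <= n)%nat -> (1 <= n)%nat ->
   forall k, Rabs (cesaro_mean n y k - c) <= K / INR n) ->
  exists M, forall t, 0 < t -> forall k, Rabs (expA t y k - c) <= M / t.
Proof.
  intros Hy Hc. set (z := fun k => y k - c). set (Bz := B + Rabs c).
  assert (Hz : bounded_by z Bz) by (apply bounded_by_sub_const; auto).
  assert (Hmean : forall n k, (N0 <= n)%nat -> (1 <= n)%nat ->
                  INR n * Rabs (cesaro_mean n z k) <= Rabs K).
  { intros n k Hn Hn1. assert (0 < INR n) by (apply lt_0_INR; lia).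
    unfold z. rewrite cesaro_mean_sub_const by auto.
    pose proof (Hc n Hn Hn1 k) as Hr. apply (Rmult_le_compat_l (INR n)) in Hr; [|lra].
    replace (INR n * (K / INR n)) with K in Hr by (field; lra). pose proof (Rle_abs K). lra. }
  set (D := Bz + Rabs K + INR N0 * Bz).
  exists D. intros t Ht k.
  rewrite <- (expA_sub_const t ltac:(lra) y B c k Hy). fold z.
  apply Rle_plus_epsilon. intros eps He.
  destruct (eventually_div_le (Rabs K) eps He) as [N1 [HN1 HN]].
  set (N := (N0 + N1)%nat). assert (HNp : 0 < INR N) by (apply lt_0_INR; unfold N; lia).
  eapply Rle_trans; [apply (expA_mean_potential_split t z Bz N D); auto; try (unfold N; lia)|].
  - apply mean_potential_bounded; [intros; apply psum_Tpow_bound_of_rate; auto|].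
    pose proof (bounded_by_nonneg _ _ Hz). pose proof (Rabs_pos K). pose proof (pos_INR N0).
    unfold D. nra.
  - assert (Rabs (expA t (cesaro_mean N z) k) <= eps); [|lra].
    apply (expA_bounded t ltac:(lra) (cesaro_mean N z)). intros k'.
    pose proof (Hmean N k' ltac:(unfold N; lia) ltac:(unfold N; lia)).
    pose proof (HN N ltac:(unfold N; lia)) as HKN.
    apply (Rmult_le_compat_l (INR N)) in HKN; [|lra].
    replace (INR N * (Rabs K / INR N)) with (Rabs K) in HKN by (field; lra).
    apply (Rmult_le_reg_l (INR N)); lra.
Qed.

(** * Limit profiles *)

Section LimitProfile.
Variables (y ct : seqZ) (B : R).
Hypotheses (Hy : bounded_by y B) (Hlim : tendsto_unif_t (fun t => expA t y) ct).

(* A ct = A exp(tA) y - A (exp(tA) y - ct), where the first term is O(1/t). *)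
Lemma limit_profile_harmonic k : Ar ct k = 0.
Proof.
  assert (HB := bounded_by_nonneg y B Hy).
  apply Rabs_le_eps_eq0. intros eps He. destruct (Hlim (eps / 4)) as [T HT]; [lra|].
  set (t := Rmax T 0 + 2 * B / eps + 1).
  assert (HBe : 0 <= 2 * B / eps) by (apply Rle_mult_inv_pos; lra).
  assert (Ht1 : T <= t) by (unfold t; pose proof (Rmax_l T 0); lra).
  assert (Ht0 : 0 < t) by (unfold t; pose proof (Rmax_r T 0); lra).
  assert (H1 : Rabs (Ar (expA t y) k) <= B / t) by (apply Ar_expA_bound; auto).
  assert (H2 : B / t <= eps / 2).
  { apply (Rmult_le_reg_r t); auto. unfold Rdiv. rewrite Rmult_assoc, Rinv_l by lra.
    assert (2 * B / eps * eps = 2 * B) by (field; lra).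
    assert (2 * B / eps < t) by (unfold t; pose proof (Rmax_r T 0); lra). nra. }
  assert (H3 : Rabs (Ar (fun k => expA t y k - ct k) k) <= 2 * (eps / 4))
    by (apply Ar_bounded; intros k'; apply HT; lra).
  replace (Ar ct k) with (Ar (expA t y) k - Ar (fun k => expA t y k - ct k) k)
    by (unfold Ar, Tr, avg2; ring).
  eapply Rle_trans; [apply Rabs_minus_le | lra].
Qed.

Lemma limit_profile_bounded : bounded_by ct (B + 1).
Proof.
  intros k. destruct (Hlim 1) as [T HT]; [lra|].
  specialize (HT (Rmax T 0) (Rmax_l _ _) (Rmax_r _ _) k).
  pose proof (expA_bounded (Rmax T 0) (Rmax_r _ _) y B Hy k).
  replace (ct k) with (expA (Rmax T 0) y k - (expA (Rmax T 0) y k - ct k)) by ring.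
  eapply Rle_trans; [apply Rabs_minus_le | lra].
Qed.

End LimitProfile.

(* A c = 0 makes c affine on Z, and a bounded affine sequence is constant. *)
Lemma harmonic_bounded_const c D : (forall k, Ar c k = 0) -> bounded_by c D ->
  forall k, c k = c 0%Z.
Proof.
  intros Hh Hb. set (e := fun k => c (k + 1)%Z - c k).
  assert (He : forall k, e k = e 0%Z).
  { assert (Hstep : forall k, e k = e (k - 1)%Z).
    { intros k. specialize (Hh k). unfold Ar, Tr, avg2 in Hh. unfold e.
      replace (k - 1 + 1)%Z with k by lia. replace (k + -1)%Z with (k - 1)%Z in Hh by lia. lra. }
    apply Z.peano_ind; [reflexivity | |]; intros x Hx.
    - rewrite Hstep, Z.sub_1_r, Z.pred_succ. exact Hx.
    - rewrite <- Hx, (Hstep x), Z.sub_1_r. reflexivity. }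
  assert (Haff : forall n, c (Z.of_nat n) = c 0%Z + INR n * e 0%Z).
  { induction n; [simpl; ring|].
    replace (c (Z.of_nat (S n))) with (c (Z.of_nat n) + e (Z.of_nat n))
      by (unfold e; rewrite Nat2Z.inj_succ, Z.add_1_r; ring).
    rewrite IHn, (He (Z.of_nat n)), S_INR. ring. }
  assert (He0 : e 0%Z = 0).
  { apply Rabs_le_eps_eq0. intros eps Heps.
    destruct (eventually_div_le (2 * D) eps Heps) as [N [HN1 HN]].
    assert (HNp : 0 < INR N) by (apply lt_0_INR; lia).
    assert (Hd : INR N * Rabs (e 0%Z) <= 2 * D).
    { rewrite <- (Rabs_right (INR N)), <- Rabs_mult by lra.
      replace (INR N * e 0%Z) with (c (Z.of_nat N) - c 0%Z) by (rewrite Haff; ring).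
      eapply Rle_trans; [apply Rabs_minus_le|].
      pose proof (Hb (Z.of_nat N)). pose proof (Hb 0%Z). lra. }
    pose proof (HN N (le_n _)).
    apply (Rmult_le_reg_l (INR N)); auto.
    apply (Rmult_le_compat_l (INR N)) in H; [|lra].
    replace (INR N * (2 * D / INR N)) with (2 * D) in H by (field; lra). lra. }
  assert (Hflat : forall k, c (Z.succ k) = c k).
  { intros k. assert (Hk : e k = 0) by (rewrite He; exact He0).
    unfold e in Hk. rewrite Z.add_1_r in Hk. lra. }
  apply Z.peano_ind; [reflexivity | |]; intros x Hx.
  - rewrite Hflat. exact Hx.
  - rewrite <- Hx, <- (Hflat (Z.pred x)), Z.succ_pred. reflexivity.
Qed.

(* y - c = (exp(tA) y - c) - A w with w the primitive of exp(sA) y on [0, t], and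
   the Cesaro means of A w are O(t/n). *)
Theorem cesaro_tendsto_of_expA y B c : bounded_by y B ->
  tendsto_unif_t (fun t => expA t y) (fun _ => c) -> tendsto_unif_n (fun n => cesaro_mean n y) c.
Proof.
  intros Hy Hlim eps He. destruct (Hlim (eps / 2)) as [T HT]; [lra|].
  set (t := Rmax T 0). assert (Ht0 : 0 <= t) by apply Rmax_r.
  set (w := expA_primitive t y).
  assert (Hw : bounded_by w (t * B)) by (apply expA_primitive_bounded; auto).
  destruct (eventually_div_le (2 * (t * B)) (eps / 2)) as [N0 [HN1 HN]]; [lra|].
  exists N0. intros n Hn Hn1 k.
  rewrite <- cesaro_mean_sub_const by auto.
  replace (fun k => y k - c) with (fun k => (expA t y k - c) - Ar w k)
    by (apply functional_extensionality; intros k'; unfold w;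
        rewrite (Ar_expA_primitive t Ht0 y B k' Hy); ring).
  rewrite cesaro_mean_minus. eapply Rle_trans; [apply Rabs_minus_le|].
  assert (Rabs (cesaro_mean n (fun k => expA t y k - c) k) <= eps / 2)
    by (apply cesaro_mean_nonexpansive; intros k'; apply HT; [apply Rmax_l | auto]).
  pose proof (cesaro_mean_Ar_bound n w (t * B) k Hn1 Hw). pose proof (HN n Hn). lra.
Qed.

(** * Complex sequences *)

(* Common properties of the real and imaginary parts [fst] and [snd]. *)
Record component (cpt : Cx -> R) : Prop := {
  cpt_Cadd : forall a b, cpt (Cadd a b) = cpt a + cpt b;
  cpt_Csub : forall a b, cpt (Csub a b) = cpt a - cpt b;
  cpt_Cscal : forall r a, cpt (Cscal r a) = r * cpt a;
  cpt_C0 : cpt C0 = 0;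
  cpt_Cnorm : forall z, Rabs (cpt z) <= Cnorm z }.

Arguments cpt_Cadd {cpt}. Arguments cpt_Csub {cpt}. Arguments cpt_Cscal {cpt}.
Arguments cpt_C0 {cpt}. Arguments cpt_Cnorm {cpt}.

Section Component.
Variable cpt : Cx -> R.
Hypothesis Hcpt : component cpt.

Definition cpt_seq (x : Z -> Cx) : seqZ := fun k => cpt (x k).

Lemma cpt_seq_bounded x0 M : (forall k, Cnorm (x0 k) <= M) -> bounded_by (cpt_seq x0) M.
Proof. intros H k. eapply Rle_trans; [apply (cpt_Cnorm Hcpt) | apply H]. Qed.

Lemma cpt_Csum f m n : cpt (Csum f m n) = psum (fun i => cpt (f (m + i)%nat)) (S n - m).
Proof.
  unfold Csum. generalize (S n - m)%nat as len. intros len. revert m.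
  induction len; intros m; [apply (cpt_C0 Hcpt)|].
  simpl seq. simpl map. simpl fold_right. rewrite (cpt_Cadd Hcpt), IHlen, psum_first, Nat.add_0_r.
  f_equal. apply psum_ext; intros. rewrite Nat.add_succ_r. reflexivity.
Qed.

Lemma cpt_Apow n x : cpt_seq (Apow n x) = Arpow n (cpt_seq x).
Proof.
  induction n; auto. change (cpt_seq (Aop (Apow n x)) = Ar (Arpow n (cpt_seq x))).
  rewrite <- IHn. apply functional_extensionality; intros k.
  unfold cpt_seq, Aop, Ar, Tr, avg2, Sshift, Sinv.
  rewrite (cpt_Csub Hcpt), (cpt_Cscal Hcpt), (cpt_Cadd Hcpt).
  replace (k - 1)%Z with (k + -1)%Z by lia. reflexivity.
Qed.

Lemma cpt_exp_partial t x0 N k :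
  cpt (exp_partial t x0 N k) = psum (fun n => t ^ n / INR (fact n) * Arpow n (cpt_seq x0) k) (S N).
Proof.
  unfold exp_partial. rewrite cpt_Csum, Nat.sub_0_r. apply psum_ext; intros n _.
  rewrite (cpt_Cscal Hcpt), <- cpt_Apow. reflexivity.
Qed.

(* The inner sum of the Cesaro expression is T^j x0, by the binomial form of T^j. *)
Lemma cpt_cesaro x0 n k : cpt (cesaro x0 n k) = cesaro_mean n (cpt_seq x0) k.
Proof.
  unfold cesaro, cesaro_mean. rewrite (cpt_Cscal Hcpt), cpt_Csum.
  replace (S n - 1)%nat with n by lia.
  f_equal. apply psum_ext. intros i _. rewrite (cpt_Cscal Hcpt), cpt_Csum, Nat.sub_0_r.
  unfold Tpow, Tr. rewrite avg2_iter. f_equal. apply psum_ext; intros l _. rewrite (cpt_Cscal Hcpt).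
  unfold cpt_seq. replace (1 + i)%nat with (S i) by lia.
  do 3 f_equal. lia.
Qed.

Lemma cpt_exp_sol x0 x M t k : (forall k, Cnorm (x0 k) <= M) -> is_exp_sol x0 x -> 0 <= t ->
  cpt (x t k) = expA t (cpt_seq x0) k.
Proof.
  intros HM Hx Ht. apply Rminus_diag_uniq, Rabs_le_eps_eq0. intros eps He.
  destruct (Hx t Ht (eps / 2)) as [N1 HN1]; [lra|].
  destruct (exp_partial_expA_uniform t Ht _ _ (cpt_seq_bounded x0 M HM) (eps / 2)) as [N2 HN2];
    [lra|].
  specialize (HN1 (N1 + N2)%nat ltac:(lia) k). specialize (HN2 (N1 + N2)%nat ltac:(lia) k).
  pose proof (cpt_Cnorm Hcpt (Csub (exp_partial t x0 (N1 + N2) k) (x t k))) as H.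
  rewrite (cpt_Csub Hcpt), cpt_exp_partial in H.
  set (p := psum (fun n => t ^ n / INR (fact n) * Arpow n (cpt_seq x0) k) (S (N1 + N2))) in *.
  replace (cpt (x t k) - expA t (cpt_seq x0) k)
    with (- (p - cpt (x t k)) + (p - expA t (cpt_seq x0) k)) by ring.
  eapply Rle_trans; [apply Rabs_triang|]. rewrite Rabs_Ropp. lra.
Qed.

Lemma cpt_expsol_tendsto x0 M c : (forall k, Cnorm (x0 k) <= M) -> is_exp_sol x0 (expsol x0) ->
  (forall eps, 0 < eps -> exists T, forall t, T <= t -> 0 <= t ->
     forall k, Cnorm (Csub (expsol x0 t k) (c k)) <= eps) ->
  tendsto_unif_t (fun t => expA t (cpt_seq x0)) (cpt_seq c).
Proof.
  intros HM Hsol Hc eps He. destruct (Hc eps He) as [T HT]. exists T. intros t Ht Ht0 k.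
  rewrite <- (cpt_exp_sol x0 (expsol x0) M t k HM Hsol Ht0).
  unfold cpt_seq. rewrite <- (cpt_Csub Hcpt).
  eapply Rle_trans; [apply (cpt_Cnorm Hcpt) | apply HT; auto].
Qed.

Lemma cpt_cesaro_tendsto x0 c : cesaro_conv x0 c ->
  tendsto_unif_n (fun n => cesaro_mean n (cpt_seq x0)) (cpt c).
Proof.
  intros Hc eps He. destruct (Hc eps He) as [N0 HN0]. exists N0. intros n Hn Hn1 k.
  rewrite <- cpt_cesaro, <- (cpt_Csub Hcpt).
  eapply Rle_trans; [apply (cpt_Cnorm Hcpt) | apply HN0; auto].
Qed.

End Component.

Lemma fst_component : component fst.
Proof.
  split; try reflexivity.
  intros z. unfold Cnorm. rewrite <- sqrt_Rsqr_abs. apply sqrt_le_1_alt.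
  pose proof (pow2_ge_0 (snd z)). unfold Rsqr. simpl. nra.
Qed.

Lemma snd_component : component snd.
Proof.
  split; try reflexivity.
  intros z. unfold Cnorm. rewrite <- sqrt_Rsqr_abs. apply sqrt_le_1_alt.
  pose proof (pow2_ge_0 (fst z)). unfold Rsqr. simpl. nra.
Qed.

Lemma Cnorm_le_components z : Cnorm z <= Rabs (fst z) + Rabs (snd z).
Proof.
  unfold Cnorm. pose proof (Rabs_pos (fst z)). pose proof (Rabs_pos (snd z)).
  rewrite <- (sqrt_square (Rabs (fst z) + Rabs (snd z))) by lra.
  apply sqrt_le_1_alt. pose proof (Rsqr_abs (fst z)). pose proof (Rsqr_abs (snd z)).
  unfold Rsqr in *. simpl. nra.
Qed.

Lemma expsol_is_exp_sol x0 : linf_bounded x0 -> is_exp_sol x0 (expsol x0).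
Proof.
  intros [M HM]. unfold expsol. apply epsilon_spec.
  exists (fun t k => (expA t (cpt_seq fst x0) k, expA t (cpt_seq snd x0) k)).
  intros t Ht eps He.
  destruct (exp_partial_expA_uniform t Ht _ _ (cpt_seq_bounded fst fst_component x0 M HM) (eps / 2))
    as [N1 H1]; [lra|].
  destruct (exp_partial_expA_uniform t Ht _ _ (cpt_seq_bounded snd snd_component x0 M HM) (eps / 2))
    as [N2 H2]; [lra|].
  exists (N1 + N2)%nat. intros N HN k. eapply Rle_trans; [apply Cnorm_le_components|].
  change (Rabs (fst (exp_partial t x0 N k) - expA t (cpt_seq fst x0) k) +
          Rabs (snd (exp_partial t x0 N k) - expA t (cpt_seq snd x0) k) <= eps).
  rewrite (cpt_exp_partial fst fst_component), (cpt_exp_partial snd snd_component).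
  specialize (H1 N ltac:(lia) k). specialize (H2 N ltac:(lia) k). lra.
Qed.

Lemma cesaro_conv_of_good x0 ct : linf_bounded x0 ->
  (forall eps, 0 < eps -> exists T, forall t, T <= t -> 0 <= t ->
     forall k, Cnorm (Csub (expsol x0 t k) (ct k)) <= eps) ->
  cesaro_conv x0 (ct 0%Z).
Proof.
  intros Hb Hct. pose proof Hb as [M HM]. assert (Hsol := expsol_is_exp_sol x0 Hb).
  assert (Hpart : forall cpt, component cpt ->
            tendsto_unif_n (fun n => cesaro_mean n (cpt_seq cpt x0)) (cpt (ct 0%Z))).
  { intros cpt Hcpt. assert (Hy := cpt_seq_bounded cpt Hcpt x0 M HM).
    assert (Hlim := cpt_expsol_tendsto cpt Hcpt x0 M ct HM Hsol Hct).
    assert (Hconst := harmonic_bounded_const _ _ (limit_profile_harmonic _ _ _ Hy Hlim)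
                                             (limit_profile_bounded _ _ _ Hy Hlim)).
    apply (cesaro_tendsto_of_expA _ M); auto.
    intros eps He. destruct (Hlim eps He) as [T HT]. exists T. intros t Ht Ht0 k.
    change (cpt (ct 0%Z)) with (cpt_seq cpt ct 0%Z). rewrite <- (Hconst k). apply HT; auto. }
  intros eps He.
  destruct (Hpart fst fst_component (eps / 2)) as [N1 H1]; [lra|].
  destruct (Hpart snd snd_component (eps / 2)) as [N2 H2]; [lra|].
  exists (N1 + N2)%nat. intros n Hn Hn1 k. eapply Rle_trans; [apply Cnorm_le_components|].
  change (Rabs (fst (cesaro x0 n k) - fst (ct 0%Z)) +
          Rabs (snd (cesaro x0 n k) - snd (ct 0%Z)) <= eps).
  rewrite (cpt_cesaro fst fst_component), (cpt_cesaro snd snd_component).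
  specialize (H1 n ltac:(lia) Hn1 k). specialize (H2 n ltac:(lia) Hn1 k). lra.
Qed.

Lemma sol_conv_of_cesaro_conv x0 c : linf_bounded x0 -> cesaro_conv x0 c -> sol_conv x0 c.
Proof.
  intros Hb Hc. pose proof Hb as [M HM]. assert (Hsol := expsol_is_exp_sol x0 Hb).
  assert (Hpart : forall cpt, component cpt ->
            tendsto_unif_t (fun t => expA t (cpt_seq cpt x0)) (fun _ => cpt c)).
  { intros cpt Hcpt. apply (expA_tendsto_of_cesaro _ M); [apply cpt_seq_bounded; auto|].
    apply cpt_cesaro_tendsto; auto. }
  intros eps He.
  destruct (Hpart fst fst_component (eps / 2)) as [T1 H1]; [lra|].
  destruct (Hpart snd snd_component (eps / 2)) as [T2 H2]; [lra|].
  exists (Rmax T1 T2). intros t Ht Ht0 k. eapply Rle_trans; [apply Cnorm_le_components|].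
  change (Rabs (fst (expsol x0 t k) - fst c) + Rabs (snd (expsol x0 t k) - snd c) <= eps).
  rewrite (cpt_exp_sol fst fst_component x0 _ M t k HM Hsol Ht0).
  rewrite (cpt_exp_sol snd snd_component x0 _ M t k HM Hsol Ht0).
  pose proof (H1 t (Rle_trans _ _ _ (Rmax_l T1 T2) Ht) Ht0 k).
  pose proof (H2 t (Rle_trans _ _ _ (Rmax_r T1 T2) Ht) Ht0 k). lra.
Qed.

Lemma sol_O_of_cesaro_O x0 c : linf_bounded x0 -> cesaro_O x0 c -> sol_O x0 c.
Proof.
  intros Hb [K [N0 HK]]. pose proof Hb as [M HM]. assert (Hsol := expsol_is_exp_sol x0 Hb).
  assert (Hpart : forall cpt, component cpt ->
            exists D, forall t, 0 < t ->
            forall k, Rabs (expA t (cpt_seq cpt x0) k - cpt c) <= D / t).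
  { intros cpt Hcpt. apply (expA_rate_of_cesaro_rate _ M _ K N0); [apply cpt_seq_bounded; auto|].
    intros n Hn Hn1 k. rewrite <- (cpt_cesaro cpt Hcpt), <- (cpt_Csub Hcpt).
    eapply Rle_trans; [apply (cpt_Cnorm Hcpt) | apply HK; auto]. }
  destruct (Hpart fst fst_component) as [D1 H1]. destruct (Hpart snd snd_component) as [D2 H2].
  exists (D1 + D2), 0. intros t _ Ht k. eapply Rle_trans; [apply Cnorm_le_components|].
  change (Rabs (fst (expsol x0 t k) - fst c) + Rabs (snd (expsol x0 t k) - snd c) <= (D1 + D2) / t).
  rewrite (cpt_exp_sol fst fst_component x0 _ M t k HM Hsol (Rlt_le _ _ Ht)).
  rewrite (cpt_exp_sol snd snd_component x0 _ M t k HM Hsol (Rlt_le _ _ Ht)).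
  pose proof (H1 t Ht k). pose proof (H2 t Ht k).
  replace ((D1 + D2) / t) with (D1 / t + D2 / t) by (field; lra). lra.
Qed.

Theorem theorem3 (x0 : Z -> Cx) (Hb : linf_bounded x0) :
  (good_constellation x0 <-> exists c : Cx, cesaro_conv x0 c) /\
  (forall c : Cx, cesaro_conv x0 c -> sol_conv x0 c) /\
  (forall c : Cx, cesaro_O x0 c -> sol_O x0 c).
Proof.
  split; [split|split].
  - intros [ct Hct]. exists (ct 0%Z). exact (cesaro_conv_of_good x0 ct Hb Hct).
  - intros [c Hc]. exists (fun _ => c). exact (sol_conv_of_cesaro_conv x0 c Hb Hc).
  - intros c. exact (sol_conv_of_cesaro_conv x0 c Hb).
  - intros c. exact (sol_O_of_cesaro_O x0 c Hb).
Qed.
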